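(* Let $q\ge5$ be coprime to $6$, let $\chi$ be a real primitive Dirichlet character of conductor $q$, and let $f:\mathbb{N}\to\{-1,1\}$ be a multiplicative function with $\mathbb{D}(f,\chi;\infty)<\infty$. If $S\subset\{0,1,2,3\}$ has size $2$ or $3$, then $\Xi_{\boldsymbol a}(S)=0$ for any vector $\boldsymbol a=(a_j)_{j\in S}$ of divisors of $q$.
   Context: $\mathbb{D}(f,g;\infty)^2=\lim_{x\to\infty}\sum_{p\le x}\frac{1-\mathrm{Re}(f(p)\overline{g(p)})}{p}$. For $S\subseteq\{0,1,2,3\}$ and $\boldsymbol a=(a_j)_{j\in S}$, $\Xi_{\boldsymbol a}(S):=\sum\prod_{j\in S}\chi(b_j)$, the sum over residues $(b_j)_{j\in S}$ mod $q$ for which there exist integers $n,d$ with $a_j\mid n+jd$ and $(n+jd)/a_j\equiv b_j\pmod q$ for all $j\in S$. *)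

From HB Require Import structures.
From mathcomp Require Import all_boot all_order all_algebra.
From mathcomp Require Import boolp classical_sets reals topology normedtype sequences.
Set Implicit Arguments. Unset Strict Implicit. Unset Printing Implicit Defensive.
Import Order.TTheory GRing.Theory Num.Theory numFieldNormedType.Exports.
Local Open Scope ring_scope.

Definition dirichlet_char (q : nat) (chi : nat -> int) : Prop :=
  [/\ chi 1%N = 1,
      (forall m n : nat, chi (m * n)%N = chi m * chi n),
      (forall n : nat, chi (n + q)%N = chi n)
    & (forall n : nat, (chi n == 0) = ~~ coprime n q)].

(* chi is primitive modulo q (its conductor is q): the only induced modulus
   d dividing q (chi constant on classes mod d among units mod q) is q itself. *)
Definition primitive_char (q : nat) (chi : nat -> int) : Prop :=
  dirichlet_char q chi /\
  forall d : nat, (d %| q)%N ->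
    (forall m n : nat, coprime m q -> coprime n q -> m = n %[mod d] -> chi m = chi n) ->
    d = q.

Definition multiplicative_pm1 (f : nat -> int) : Prop :=
  [/\ f 1%N = 1,
      (forall n : nat, (0 < n)%N -> f n = 1 \/ f n = -1)
    & (forall m n : nat, (0 < m)%N -> (0 < n)%N -> coprime m n -> f (m * n)%N = f m * f n)].

(* Partial sums  sum_{p <= x} (1 - Re(f(p) conj(g(p))))/p  for real-valued f, g. *)
Definition pdist_partial (R : realType) (f g : nat -> int) (x : nat) : R :=
  \sum_(p < x.+1 | prime p) (1 - (f p * g p)%:~R) / (p%:R).

Definition pdist_finite (R : realType) (f g : nat -> int) : Prop :=
  cvgn (pdist_partial R f g).

(* Xi_a(S) = sum over residues (b_j)_{j in S} mod q admissible for some integers n,d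
   of prod_{j in S} chi(b_j).  Tuples indexed by S are encoded as functions 'I_4 -> 'I_q
   that vanish outside S. *)
Definition Xi (q : nat) (chi : nat -> int) (a : 'I_4 -> nat) (S : {set 'I_4}) : int :=
  \sum_(b : {ffun 'I_4 -> 'I_q} |
          [forall j, (j \notin S) ==> (nat_of_ord (b j) == 0%N)] &&
          `[< exists n d : int, forall j : 'I_4, j \in S ->
                ((a j)%:Z %| n + (nat_of_ord j)%:Z * d)%Z /\
                (((n + (nat_of_ord j)%:Z * d) %/ (a j)%:Z)%Z = (nat_of_ord (b j))%:Z %[mod q%:Z])%Z >])
     \prod_(j in S) chi (nat_of_ord (b j)).

From HB Require Import structures.
From mathcomp Require Import all_boot all_order all_algebra.
From mathcomp Require Import boolp classical_sets reals topology normedtype sequences.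
From mathcomp Require Import zify ring.
Import Order.TTheory GRing.Theory Num.Theory numFieldNormedType.Exports.

(* As chi is primitive and q > 1, chi c = -1 for some unit c mod q, and in both
   cases multiplying some coordinates of the residue vectors b by c is a bijection
   of the summation domain of Xi that flips the sign of prod_(j in S) chi (b j).
   If #|S| = 3, scale every coordinate: replacing (n, d) by (c n, c d) shows that
   admissibility is preserved, and the sign is chi c ^+ 3 = -1.  If S = {i, j},
   every b is admissible, because |j - i| divides 6 and is hence prime to q, so the
   Chinese remainder theorem solves for n and d; scale the coordinate i alone. *)

Set Implicit Arguments. Unset Strict Implicit.
Local Open Scope ring_scope.

Lemma sumr_eq0_sign_reversing (V : numDomainType) (I : finType) (P : pred I)
    (F : I -> V) (h : I -> I) :
  injective h -> (forall b, P (h b) = P b) -> (forall b, F (h b) = - F b) ->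
  \sum_(b | P b) F b = 0.
Proof.
move=> h_inj hP hF.
have : \sum_(b | P b) F b = - \sum_(b | P b) F b.
  rewrite {1}(reindex_inj h_inj) -sumrN.
  by apply: eq_big => [b | b _]; rewrite ?hP ?hF.
by move/eqP; rewrite -addr_eq0 -mulr2n mulrn_eq0 /= => /eqP.
Qed.

Lemma coprime_modn_inv c q : coprime c q -> exists c', (c' * c = 1 %[mod q])%N.
Proof.
case: c => [|c]; first by rewrite /coprime gcd0n => /eqP ->; exists 0%N; rewrite !modn1.
move=> /eqnP cq; case: (egcdnP q (ltn0Sn c)) => km kn def_km _.
by exists km; rewrite def_km cq modnMDl.
Qed.

Section DirichletCharacter.
Variables (q : nat) (chi : nat -> int).
Hypothesis chi_char : dirichlet_char q chi.

Lemma dirichlet_charM m n : chi (m * n)%N = chi m * chi n.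
Proof. by case: chi_char. Qed.

Lemma dirichlet_char_mod n : chi (n %% q)%N = chi n.
Proof.
case: chi_char => _ _ chi_per _; rewrite {2}(divn_eq n q) addnC.
by elim: (n %/ q)%N => [|k IHk]; rewrite ?mul0n ?addn0 // mulSn addnCA addnC chi_per.
Qed.

Lemma dirichlet_char_unit c : coprime c q -> chi c = 1 \/ chi c = -1.
Proof.
case/coprime_modn_inv => c' cK.
have : chi c' * chi c = 1.
  by rewrite -dirichlet_charM -dirichlet_char_mod cK dirichlet_char_mod; case: chi_char.
by move/intUnitRing.unitzPl; rewrite qualifE => /orP[]/eqP; [left | right].
Qed.

End DirichletCharacter.

Lemma primitive_char_neg q chi : (1 < q)%N -> primitive_char q chi ->
  exists2 c, coprime c q & chi c = -1.
Proof.
move=> q_gt1 [chi_char chi_prim]; apply: contrapT => no_neg.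
have chi_unit1 m : coprime m q -> chi m = 1.
  move=> mq; case: (dirichlet_char_unit chi_char mq) => // chi_m.
  by case: no_neg; exists m.
have q1 : 1%N = q by apply: chi_prim (dvd1n q) _ => m n mq nq _; rewrite !chi_unit1.
by rewrite -q1 in q_gt1.
Qed.

Lemma progression_through (i j x y : int) : (j - i %| y - x)%Z ->
  exists n d, n + i * d = x /\ n + j * d = y.
Proof.
move=> ji_dvd; set d := ((y - x) %/ (j - i))%Z.
exists (x - i * d), d; split; first by rewrite subrK.
have -> : x - i * d + j * d = x + d * (j - i) by ring.
by rewrite divzK // addrC subrK.
Qed.

Lemma chinese_scaled a q k u w : coprime (a * q) k ->
  exists K, (K = u %[mod q])%N /\ (a * K = w %[mod k])%N.
Proof.
move=> aq_k; set X := chinese (a * q) k (a * u) w.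
exists (X %/ (a * q) * q + u %% q)%N; split; first by rewrite modnMDl modn_mod.
have -> : (a * (X %/ (a * q) * q + u %% q) = X %/ (a * q) * (a * q) + a * (u %% q))%N.
  by ring.
by rewrite muln_modr -(chinese_modl aq_k _ w) -divn_eq chinese_modr.
Qed.

Definition quot_congr (q a : nat) (x : int) (r : nat) : Prop :=
  (a%:Z %| x)%Z /\ ((x %/ a%:Z)%Z = r%:Z %[mod q%:Z])%Z.

Definition admissible (q : nat) (a : 'I_4 -> nat) (S : {set 'I_4})
    (b : {ffun 'I_4 -> 'I_q}) : Prop :=
  exists n d : int, forall j : 'I_4, j \in S ->
    quot_congr q (a j) (n + (nat_of_ord j)%:Z * d) (b j).

Lemma quot_congr_mul q a m r : (0 < a)%N -> (m = r %[mod q])%N ->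
  quot_congr q a (a * m)%N r.
Proof.
move=> a_gt0 mr; rewrite PoszM; split; first exact: dvdz_mulr.
by rewrite mulKz ?modz_nat ?mr //; lia.
Qed.

Lemma quot_congr_scale q a x r c : (0 < a)%N -> quot_congr q a x r ->
  quot_congr q a (c%:Z * x) (c * r %% q)%N.
Proof.
move=> a_gt0 [a_x xr]; split; first exact: dvdz_mull.
rewrite -(divzK a_x) mulrA mulzK; last by lia.
by rewrite -modz_nat modz_mod PoszM -modzMmr xr modzMmr.
Qed.

Lemma dist_ord4_dvd6 (i j : 'I_4) : i != j -> (`|j%:Z - i%:Z|%N %| 6)%N.
Proof. by case: i => [[|[|[|[|?]]]] ?] //; case: j => [[|[|[|[|?]]]] ?]. Qed.

Lemma admissible_pair q a (i j : 'I_4) (b : {ffun 'I_4 -> 'I_q}) :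
  coprime q 6 -> (a i %| q)%N -> (a j %| q)%N -> i != j -> admissible a [set i; j] b.
Proof.
move=> q_6 ai_q aj_q ij.
have q_gt0 : (0 < q)%N by case: (q) q_6.
have ai_gt0 := dvdn_gt0 q_gt0 ai_q; have aj_gt0 := dvdn_gt0 q_gt0 aj_q.
set k := `|j%:Z - i%:Z|%N.
have q_k : coprime q k := coprime_dvdr (dist_ord4_dvd6 ij) q_6.
have aiq_k : coprime (a i * q) k by rewrite coprimeMl q_k andbT (coprime_dvdl ai_q q_k).
(* Solving modulo a_i q rather than q makes n + i d a multiple a_i K of a_i. *)
have [K [Ku aiK]] := chinese_scaled (b i) (a j * b j) aiq_k.
have [n [d [ni nj]]] :
    exists n d, n + i%:Z * d = (a i * K)%N /\ n + j%:Z * d = (a j * b j)%N.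
  apply: progression_through.
  have : (k%:Z %| (a j * b j)%N%:Z - (a i * K)%N%:Z)%Z.
    by rewrite -eqz_mod_dvd !modz_nat aiK.
  by rewrite !dvdzE.
by exists n, d => l; rewrite !inE => /orP[]/eqP ->; rewrite ?ni ?nj; exact: quot_congr_mul.
Qed.

Section ResidueScaling.
Variables (q : nat) (q_gt0 : (0 < q)%N).

Definition scale_res (c : nat) (x : 'I_q) : 'I_q := Ordinal (ltn_pmod (c * x) q_gt0).

Definition scale_on (c : nat) (T : {set 'I_4}) (b : {ffun 'I_4 -> 'I_q}) :
    {ffun 'I_4 -> 'I_q} :=
  [ffun j => if j \in T then scale_res c (b j) else b j].

Lemma scale_resK c c' : (c' * c = 1 %[mod q])%N -> cancel (scale_res c) (scale_res c').
Proof.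
move=> cK x; apply: val_inj => /=.
by rewrite modnMmr mulnA -modnMml cK modnMml mul1n modn_small.
Qed.

Lemma scale_onK c c' T : (c' * c = 1 %[mod q])%N -> cancel (scale_on c T) (scale_on c' T).
Proof.
move=> cK b; apply/ffunP => j; rewrite !ffunE.
by case: ifP => jT; rewrite jT ?scale_resK.
Qed.

Lemma supported_on_scale c (T S : {set 'I_4}) b : T \subset S ->
  [forall j, (j \notin S) ==> (nat_of_ord (scale_on c T b j) == 0%N)] =
  [forall j, (j \notin S) ==> (nat_of_ord (b j) == 0%N)].
Proof.
move=> TS; apply: eq_forallb => j; rewrite ffunE.
by case: (boolP (j \in T)) => // /(fintype.subsetP TS) ->.
Qed.

Lemma prod_scale_on chi c (T S : {set 'I_4}) b : dirichlet_char q chi -> T \subset S ->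
  \prod_(j in S) chi (scale_on c T b j) = chi c ^+ #|T| * \prod_(j in S) chi (b j).
Proof.
move=> chi_char TS.
rewrite (eq_bigr (fun j => (if j \in T then chi c else 1) * chi (b j))); last first.
  move=> j _; rewrite ffunE; case: ifP => _; last by rewrite mul1r.
  by rewrite (dirichlet_char_mod chi_char) (dirichlet_charM chi_char).
rewrite big_split /= -big_mkcondr -prodr_const; congr (_ * _).
by apply: eq_bigl => j; rewrite andb_idl // => /(fintype.subsetP TS).
Qed.

Lemma admissible_scale_on a (S : {set 'I_4}) c b : (forall j, j \in S -> (0 < a j)%N) ->
  admissible a S b -> admissible a S (scale_on c S b).
Proof.
move=> a_gt0 [n [d nd]]; exists (c%:Z * n), (c%:Z * d) => j jS.
rewrite ffunE jS /=.
have -> : c%:Z * n + j%:Z * (c%:Z * d) = c%:Z * (n + j%:Z * d) by ring.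
exact: quot_congr_scale (a_gt0 j jS) (nd j jS).
Qed.

Lemma Xi_eq0_scale chi a (S T : {set 'I_4}) c c' :
  dirichlet_char q chi -> T \subset S ->
  (c' * c = 1 %[mod q])%N -> chi c ^+ #|T| = -1 ->
  (forall c b, admissible a S b -> admissible a S (scale_on c T b)) ->
  Xi q chi a S = 0.
Proof.
move=> chi_char TS cK chi_cT adm_scale.
apply: (@sumr_eq0_sign_reversing _ _ _ _ (scale_on c T)).
- exact: can_inj (scale_onK T cK).
- move=> b; rewrite supported_on_scale //; congr andb.
  apply/asboolP/asboolP => [adm_cb | /(adm_scale c) //].
  by rewrite -(scale_onK T cK b); apply: adm_scale.
- by move=> b; rewrite prod_scale_on // chi_cT mulN1r.
Qed.

End ResidueScaling.

Unset Implicit Arguments. Set Strict Implicit.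

Theorem lemma6p2 (R : realType) (q : nat) (chi f : nat -> int)
  (S : {set 'I_4}) (a : 'I_4 -> nat) :
  (5 <= q)%N -> coprime q 6 ->
  primitive_char q chi ->
  multiplicative_pm1 f ->
  pdist_finite R f chi ->
  (#|S| == 2)%N || (#|S| == 3)%N ->
  (forall j, j \in S -> (a j %| q)%N) ->
  Xi q chi a S = 0.
Proof.
move=> q_ge5 q_6 chi_prim _ _ S_card a_dvd.
have q_gt1 : (1 < q)%N by lia.
have q_gt0 := ltnW q_gt1.
have chi_char := chi_prim.1.
have [c c_q chi_c] := primitive_char_neg q_gt1 chi_prim.
have [c' cK] := coprime_modn_inv c_q.
case/orP: S_card => [/cards2P[i [j [ij S_ij]]] | /eqP S3].
- apply: (Xi_eq0_scale (q_gt0 := q_gt0) (T := [set i]) chi_char _ cK).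
  + by rewrite S_ij finset.sub1set !inE eqxx.
  + by rewrite cards1 expr1.
  + move=> c0 b _; rewrite S_ij; apply: admissible_pair => //; apply: a_dvd;
      by rewrite S_ij !inE eqxx ?orbT.
- apply: (Xi_eq0_scale (q_gt0 := q_gt0) (T := S) chi_char (subxx S) cK).
  + by rewrite S3 chi_c.
  + move=> c0 b; apply: admissible_scale_on => j /a_dvd; exact: dvdn_gt0.
Qed.
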